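(* Let $\mathcal H$ be a real Hilbert space, let $f:\mathcal H\to\mathbb R$ be convex and twice continuously differentiable with $\operatorname{argmin}_{\mathcal H} f\neq\emptyset$, let $t_0>0$, $\beta\ge 0$ and $\alpha=3$. Let $u:[t_0,+\infty[\to\mathcal H$ be a classical solution of $$\dddot u(t)+\frac{10}{t}\ddot u(t)+\frac{20}{t^2}\dot u(t)+\beta\,\nabla^2 f\Big(u(t)+\tfrac14 t\dot u(t)\Big)\Big(\tfrac54\dot u(t)+\tfrac14 t\ddot u(t)\Big)+\nabla f\Big(u(t)+\tfrac14 t\dot u(t)\Big)=0 .$$ Then there exists $C>0$ such that $f\big(u(t)+\tfrac14 t\dot u(t)\big)-\inf_{\mathcal H}f\le C/t^3$ for all sufficiently large $t$.
   Context: $\nabla^2 f$ is the Hessian of $f$; $\dot u,\ddot u,\dddot u$ are time derivatives of $u$. *)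

From HB Require Import structures.
From mathcomp Require Import all_boot all_order all_algebra.
From mathcomp Require Import all_classical all_reals all_analysis.
Set Implicit Arguments. Unset Strict Implicit. Unset Printing Implicit Defensive.
Import Order.TTheory GRing.Theory Num.Theory.
Import numFieldNormedType.Exports.
Local Open Scope ring_scope.
Local Open Scope classical_set_scope.

Definition is_inner_product (R : realType) (H : normedModType R)
  (ip : H -> H -> R) : Prop :=
  [/\ (forall x y, ip x y = ip y x),
      (forall a x y z, ip (a *: x + y) z = a * ip x z + ip y z)
    & (forall x, ip x x = `|x| ^+ 2)].

Definition is_gradient (R : realType) (H : normedModType R)
  (ip : H -> H -> R) (f : H -> R) (g : H -> H) : Prop :=
  forall x, differentiable f x /\ forall h, 'd f x h = ip (g x) h.

(* x |-> 'd g x is continuous for the operator norm. *)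
Definition continuous_differential (R : realType) (H : normedModType R)
  (g : H -> H) : Prop :=
  forall x (e : R), 0 < e -> exists2 d : R, 0 < d &
    forall y, `|y - x| < d -> forall h, `|'d g y h - 'd g x h| <= e * `|h|.

Definition convex_fun (R : realType) (H : normedModType R) (f : H -> R) : Prop :=
  forall (x y : H) (l : R), 0 <= l <= 1 ->
    f (l *: x + (1 - l) *: y) <= l * f x + (1 - l) * f y.

From HB Require Import structures.
From mathcomp Require Import all_boot all_order all_algebra.
From mathcomp Require Import all_classical all_reals all_analysis.
From mathcomp Require Import ring lra.
Import Order.TTheory GRing.Theory Num.Theory.
Import numFieldNormedType.Exports.
Set Implicit Arguments. Unset Strict Implicit. Unset Printing Implicit Defensive.
Local Open Scope ring_scope.
Local Open Scope classical_set_scope.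

(* Write u1, u2, u3 for the derivatives of u.  The rescaled position
   x(t) = u(t) + t/4 u1(t) has velocity xd = 5/4 u1 + t/4 u2 and acceleration
   xdd = 3/2 u2 + t/4 u3, and multiplying the third-order equation by t/4 turns
   it into the second-order system
     xdd + 4/t xd + t/4 (beta D(grad f)(x) xd + grad f(x)) = 0.
   For this system, with a minimizer xs, the anchor
     v(t) = 3 (x - xs) + t xd + beta t^2/4 grad f(x)
   satisfies v' = (beta t/2 - t^2/4) grad f(x), so the energy
     E(t) = (t^3/4 - beta t^2/2) (f(x) - f xs) + |v|^2/2
   has derivative at most beta t/2 (f(x) - f xs) by the convexity inequality
   f(x) - f xs <= <grad f(x), x - xs>.  The weighted energy E(t)(1 + 8 beta/t)
   is therefore nonincreasing for large t, while E(t) >= t^3/8 (f(x) - f xs). *)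

Lemma is_derive_shift_cvg (R : realType) (X : normedModType R) (p : R -> X)
    (t : R) (dp : X) :
  is_derive t 1 p dp -> (fun h : R => p (h *: 1 + t)) @ 0^' --> p t.
Proof.
move=> [dp1 _].
have : {for 0, continuous (fun h : R => p (h *: 1 + t))}.
  exact/differentiable_continuous/derivable1_diffP/(derivable1P _ _ _).1.
by move=> /continuous_withinNx; rewrite scale0r add0r.
Qed.

Section ProductRule.
Variables (R : realType) (U V W : normedModType R) (b : U -> V -> W).
Hypotheses (bDl : forall x y z, b (x + y) z = b x z + b y z)
  (bZl : forall (a : R) x z, b (a *: x) z = a *: b x z)
  (bDr : forall x y z, b x (y + z) = b x y + b x z)
  (bZr : forall (a : R) x z, b x (a *: z) = a *: b x z)
  (b_cont : continuous (fun z : U * V => b z.1 z.2)).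

Let bBl x y z : b (x - y) z = b x z - b y z.
Proof. by rewrite -scaleN1r bDl bZl scaleN1r. Qed.

Let bBr x y z : b x (y - z) = b x y - b x z.
Proof. by rewrite -scaleN1r bDr bZr scaleN1r. Qed.

Lemma is_derive_pairing (p : R -> U) (q : R -> V) (t : R) (dp : U) (dq : V) :
  is_derive t 1 p dp -> is_derive t 1 q dq ->
  is_derive t 1 (fun s => b (p s) (q s)) (b (p t) dq + b dp (q t)).
Proof.
move=> Dp Dq; have p_cvg := is_derive_shift_cvg Dp.
case: Dp => dp1 vp; case: Dq => dq1 vq.
pose quot (X : normedModType R) (r : R -> X) h := h^-1 *: ((r \o shift t) (h *: 1) - r t).
have quotE : quot _ (fun s => b (p s) (q s)) =
    (fun h => b (p (h *: 1 + t)) (quot _ q h) + b (quot _ p h) (q t)).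
  apply/funext => h; rewrite /quot /= bZr bZl -scalerDr.
  by rewrite bBr bBl addrA subrK.
have L : quot _ (fun s => b (p s) (q s)) @ 0^' --> b (p t) dq + b dp (q t).
  rewrite quotE; apply: cvgD.
  - apply: (continuous2_cvg _ (@b_cont (p t, dq))) => //.
    by rewrite -vq; exact: dq1.
  - apply: (continuous2_cvg _ (@b_cont (dp, q t))); last exact: cvg_cst.
    by rewrite -vp; exact: dp1.
by apply: DeriveDef; [exact: (cvgP _ L) | exact: cvg_lim L].
Qed.
End ProductRule.

Lemma is_derive_scale (R : realType) (V : normedModType R) (k : R -> R) (F : R -> V) (t dk : R) (dF : V) :
  is_derive t 1 k dk -> is_derive t 1 F dF ->
  is_derive t 1 (fun s => k s *: F s) (k t *: dF + dk *: F t).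
Proof.
apply: (@is_derive_pairing R R^o V V (fun k v => k *: v)).
- by move=> *; rewrite scalerDl.
- by move=> a x z; rewrite scalerA.
- by move=> *; rewrite scalerDr.
- by move=> a x z; rewrite !scalerA mulrC.
- exact: scale_continuous.
Qed.

Lemma is_derive_mul (R : realType) (k l : R -> R) (t dk dl : R) :
  is_derive t 1 k dk -> is_derive t 1 l dl ->
  is_derive t 1 (fun s => k s * l s) (k t * dl + dk * l t).
Proof. exact: (@is_derive_scale R R). Qed.

Lemma is_derive_comp (R : realType) (V W : normedModType R) (F : V -> W)
    (c : R -> V) (t : R) (dc : V) :
  differentiable F (c t) -> is_derive t 1 c dc ->
  is_derive t 1 (F \o c) ('d F (c t) dc).
Proof.
move=> dF [dc1 vc].
have dct : differentiable c t by apply/derivable1_diffP.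
have dFc : differentiable (F \o c) t by apply: differentiable_comp.
apply: DeriveDef; first exact/derivable1_diffP.
by rewrite deriveE // diff_comp //= -vc deriveE.
Qed.

Section InnerProduct.
Variables (R : realType) (H : normedModType R) (ip : H -> H -> R).
Hypothesis hip : is_inner_product ip.

Lemma ipC x y : ip x y = ip y x. Proof. by case: hip. Qed.

Lemma ipDl x y z : ip (x + y) z = ip x z + ip y z.
Proof. by case: hip => _ h _; have := h 1 x y z; rewrite scale1r mul1r. Qed.

Lemma ip0l z : ip 0 z = 0.
Proof. by case: hip => _ h _; have := h 1 0 0 z; rewrite scale1r addr0 mul1r; lra. Qed.

Lemma ipZl a x z : ip (a *: x) z = a * ip x z.
Proof. by case: hip => _ h _; have := h a x 0 z; rewrite addr0 ip0l addr0. Qed.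

Lemma ipDr x y z : ip z (x + y) = ip z x + ip z y.
Proof. by rewrite ipC ipDl !(ipC z). Qed.

Lemma ipZr a x z : ip z (a *: x) = a * ip z x.
Proof. by rewrite ipC ipZl ipC. Qed.

Lemma ipBr x y z : ip z (x - y) = ip z x - ip z y.
Proof. by rewrite -scaleN1r ipDr ipZr mulN1r. Qed.

Lemma ipBl x y z : ip (x - y) z = ip x z - ip y z.
Proof. by rewrite ipC ipBr !(ipC z). Qed.

Lemma ip_ge0 x : 0 <= ip x x.
Proof. by case: hip => _ _ ->; exact: sqr_ge0. Qed.

Lemma ip_ext (A B : H) : (forall z, ip A z = ip B z) -> A = B.
Proof.
move=> eqAB; apply/eqP; rewrite -subr_eq0 -normr_eq0 -sqrf_eq0.
by case: hip => _ _ <-; rewrite ipBl eqAB subrr.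
Qed.

(* Polarization expresses ip through the norm, hence ip is continuous. *)
Lemma ip_continuous : continuous (fun z : H * H => ip z.1 z.2).
Proof.
have polar y z : ip y z = (`|y + z| * `|y + z| - `|y - z| * `|y - z|) / 4.
  case: hip => _ _ nn; rewrite -!expr2 -!nn.
  by rewrite !ipBl !ipDl !ipBr !ipDr (ipC z y); field.
move=> z0; rewrite (_ : (fun z : H * H => ip z.1 z.2) = (fun z =>
    (`|z.1 + z.2| * `|z.1 + z.2| - `|z.1 - z.2| * `|z.1 - z.2|) / 4)).
  have sum_cvg : (fun z : H * H => z.1 + z.2) @ z0 --> z0.1 + z0.2.
    by apply: cvgD; [exact: cvg_fst | exact: cvg_snd].
  have diff_cvg : (fun z : H * H => z.1 - z.2) @ z0 --> z0.1 - z0.2.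
    by apply: cvgB; [exact: cvg_fst | exact: cvg_snd].
  by apply: cvgMr_tmp; apply: cvgB; apply: cvgM; apply: cvg_norm.
by apply/funext => z; rewrite polar.
Qed.

Lemma is_derive_ip (p q : R -> H) (t : R) (dp dq : H) :
  is_derive t 1 p dp -> is_derive t 1 q dq ->
  is_derive t 1 (fun s => ip (p s) (q s)) (ip (p t) dq + ip dp (q t)).
Proof.
apply: (@is_derive_pairing R H H R ip).
- exact: ipDl.
- exact: ipZl.
- by move=> *; rewrite ipDr.
- by move=> *; rewrite ipZr.
- exact: ip_continuous.
Qed.

Lemma convex_gradient_ineq (f : H -> R) (g : H -> H) :
  convex_fun f -> is_gradient ip f g ->
  forall x z, f x - f z <= ip (g x) (x - z).
Proof.
move=> cf gf x z; have [dfx dfv] := gf x.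
pose w := z - x.
have dfw : derivable f x w by exact: diff_derivable.
have quot_cvg : (fun h : R => h^-1 *: ((f \o shift x) (h *: w) - f x)) @ 0^'+
    --> 'D_w f x.
  move=> A /dfw /nbhs_ballP [_ /posnumP[e] xe_A].
  by exists e%:num => //= y xe_y /gt_eqF/negbT/xe_A; exact.
have : 'D_w f x <= f z - f x.
  apply: (cvgr_to_le quot_cvg); near=> h.
  have h0 : 0 < h by near: h; exact: nbhs_right_gt.
  have h1 : h <= 1 by near: h; exact: nbhs_right_le.
  have segment : h *: w + x = h *: z + (1 - h) *: x.
    by rewrite /w scalerBr scalerBl scale1r -addrA [- _ + x]addrC.
  have := cf z x h; rewrite (ltW h0) h1 -segment => /(_ isT) conv.
  rewrite /= -[h^-1 *: _]/(h^-1 * _) mulrC ler_pdivrMr //; nra.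
rewrite deriveE // dfv /w !ipBr; lra.
Unshelve. all: by end_near.
Qed.
End InnerProduct.

Lemma rescaled_ode_algebra (R : realType) (V : lmodType R) (t beta : R) (v1 v2 v3 dG G : V) :
  t != 0 ->
  v3 + (10 / t) *: v2 + (20 / t ^+ 2) *: v1 + beta *: dG + G = 0 ->
  ((3 / 2) *: v2 + (t / 4) *: v3) + (4 / t) *: ((5 / 4) *: v1 + (t / 4) *: v2)
    + (t / 4) *: (beta *: dG + G) = 0.
Proof.
move=> t_neq0 ode; rewrite -(scaler0 _ (t / 4)) -{}ode -!addrA !scalerDr !scalerA.
have -> : 4 / t * (5 / 4) = t / 4 * (20 / t ^+ 2) by field.
have -> : t / 4 * (10 / t) = 3 / 2 + 4 / t * (t / 4) by field.
rewrite scalerDl !addrA; congr (_ + _ + _).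
by rewrite [(3 / 2) *: v2 + _]addrC addrAC.
Qed.

Lemma rescaled_derivatives (R : realType) (V : normedModType R) (u : R -> V) (t : R) :
  let u1 := fun t => 'D_1 u t in
  let u2 := fun t => 'D_1 u1 t in
  let u3 := fun t => 'D_1 u2 t in
  derivable u t 1 -> derivable u1 t 1 -> derivable u2 t 1 ->
  is_derive t 1 (fun s => u s + (s / 4) *: u1 s) ((5 / 4) *: u1 t + (t / 4) *: u2 t)
  /\ is_derive t 1 (fun s => (5 / 4) *: u1 s + (s / 4) *: u2 s)
                   ((3 / 2) *: u2 t + (t / 4) *: u3 t).
Proof.
move=> u1 u2 u3 /derivableP Du /derivableP Du1 /derivableP Du2.
have Dquarter : is_derive t 1 (fun s : R => s / 4) 4^-1.
  have := is_derive_mul (is_derive_id t 1) (is_derive_cst (4^-1 : R) t 1).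
  by move=> /is_derive_eq; apply; rewrite /=; field.
split.
- have := is_deriveD Du (is_derive_scale Dquarter Du1).
  move=> /is_derive_eq; apply.
  rewrite -[ 'D_1 u t]/(u1 t) -[ 'D_1 u1 t]/(u2 t) addrCA addrC.
  by rewrite -{1}[u1 t]scale1r -scalerDl; congr (_ *: _ + _); field.
- have := is_deriveD (is_derive_scale (is_derive_cst (5 / 4 : R) t 1) Du1)
    (is_derive_scale Dquarter Du2).
  move=> /is_derive_eq; apply.
  rewrite /cst -[ 'D_1 u1 t]/(u2 t) -[ 'D_1 u2 t]/(u3 t) scale0r addr0.
  by rewrite addrCA -scalerDl addrC; congr (_ *: _ + _); field.
Qed.

Section LyapunovAnalysis.
Variables (R : realType) (H : normedModType R) (ip : H -> H -> R).
Variables (f : H -> R) (g : H -> H) (beta t0 : R) (x xd xdd : R -> H) (xs : H).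
Hypotheses (hip : is_inner_product ip) (f_convex : convex_fun f)
  (f_grad : is_gradient ip f g) (g_diff : forall y, differentiable g y)
  (xs_min : forall y, f xs <= f y) (t0_gt0 : 0 < t0) (beta_ge0 : 0 <= beta).
Hypotheses (x_der : forall t, t0 < t -> is_derive t 1 x (xd t))
  (xd_der : forall t, t0 < t -> is_derive t 1 xd (xdd t))
  (x_ode : forall t, t0 < t ->
     xdd t + (4 / t) *: xd t + (t / 4) *: (beta *: 'd g (x t) (xd t) + g (x t)) = 0).

Let gap t := f (x t) - f xs.
(* Coefficient of grad f(x) in the derivative of the anchor; <= 0 for t >= 2 beta. *)
Let damping (t : R) := beta * t / 2 - t * t / 4.
Let anchor t := 3 *: (x t - xs) + t *: xd t + (beta * (t * t) / 4) *: g (x t).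
Let energy t :=
  (t * t * t / 4 - beta * (t * t) / 2) * gap t + ip (anchor t) (anchor t) / 2.
Let energy_rate t := (3 * t * t / 4 - beta * t) * gap t
  + damping t * (3 * ip (g (x t)) (x t - xs)
                 + beta * (t * t) / 4 * ip (g (x t)) (g (x t))).
Let weighted_energy t := energy t * (1 + 8 * beta / t).

Lemma anchor_derive t : t0 < t -> is_derive t 1 anchor (damping t *: g (x t)).
Proof.
move=> t0t; have t_gt0 : 0 < t := lt_trans t0_gt0 t0t.
have t_neq0 : t != 0 by rewrite gt_eqF.
have Dx := x_der t0t.
have DG := is_derive_comp (g_diff (x t)) Dx.
have Did : is_derive t 1 (fun s : R => s) 1 := is_derive_id t 1.
have Dk : is_derive t 1 (fun s : R => beta * (s * s) / 4) (beta * t / 2).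
  have := is_derive_mul (is_derive_mul (is_derive_cst (beta : R) t 1)
    (is_derive_mul Did Did)) (is_derive_cst (4^-1 : R) t 1).
  by move=> /is_derive_eq; apply; rewrite /=; field.
have := is_deriveD (is_deriveD
  (is_derive_scale (is_derive_cst (3 : R) t 1) (is_deriveB Dx (is_derive_cst xs t 1)))
  (is_derive_scale Did (xd_der t0t))) (is_derive_scale Dk DG).
move=> /is_derive_eq; apply.
apply: (ip_ext hip) => z; have := congr1 (ip^~ z) (x_ode t0t).
rewrite /= /damping oppr0 !(ipDl hip, ipBl hip, ipZl hip, ip0l hip) => ode_z.
have -> : ip (xdd t) z = - (4 / t * ip (xd t) z
    + t / 4 * (beta * ip ('d g (x t) (xd t)) z + ip (g (x t)) z)).
  by apply/eqP; rewrite -subr_eq0 -ode_z; apply/eqP; ring.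
by field.
Qed.

(* Differentiating the energy; the terms in <grad f(x), xd> cancel. *)
Lemma energy_derive t : t0 < t -> is_derive t 1 energy (energy_rate t).
Proof.
move=> t0t; have Dx := x_der t0t.
have Did : is_derive t 1 (fun s : R => s) 1 := is_derive_id t 1.
have Dsq := is_derive_mul Did Did.
have Dgap : is_derive t 1 gap (ip (g (x t)) (xd t)).
  have := is_derive_comp (f_grad (x t)).1 Dx; rewrite (f_grad (x t)).2.
  move=> Dfx; have := is_deriveB Dfx (is_derive_cst (f xs) t 1).
  by move=> /is_derive_eq; apply; rewrite subr0.
have Dweight : is_derive t 1 (fun s : R => s * s * s / 4 - beta * (s * s) / 2)
    (3 * t * t / 4 - beta * t).
  have := is_deriveB
    (is_derive_mul (is_derive_mul Dsq Did) (is_derive_cst (4^-1 : R) t 1))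
    (is_derive_mul (is_derive_mul (is_derive_cst (beta : R) t 1) Dsq)
       (is_derive_cst (2^-1 : R) t 1)).
  by move=> /is_derive_eq; apply; rewrite /=; field.
have Danchor := anchor_derive t0t.
have := is_deriveD (is_derive_mul Dweight Dgap)
  (is_derive_mul (is_derive_ip hip Danchor Danchor) (is_derive_cst (2^-1 : R) t 1)).
move=> /is_derive_eq; apply.
rewrite /= (ipC hip (_ *: _)) !(ipZr hip) /energy_rate /anchor.
rewrite (ipC hip (g (x t)) (xd t)) (ipC hip (g (x t)) (x t - xs)).
rewrite !(ipDl hip, ipZl hip) /damping.
by field.
Qed.

Lemma gap_ge0 t : 0 <= gap t.
Proof. by rewrite subr_ge0. Qed.

Lemma energy_lower t : 4 * beta <= t -> t * t * t / 8 * gap t <= energy t.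
Proof.
move=> bt; have b0 := beta_ge0; have t_ge0 : 0 <= t by lra.
have anchor_sq := ip_ge0 hip (anchor t).
have : 0 <= t * t * (t - 4 * beta) * gap t.
  by apply: mulr_ge0 (gap_ge0 t); apply: mulr_ge0; [exact: mulr_ge0 | lra].
rewrite /energy; lra.
Qed.

(* Convexity bounds the energy rate by the gap itself. *)
Lemma energy_rate_le t : 2 * beta <= t -> energy_rate t <= beta * t / 2 * gap t.
Proof.
move=> bt; have b0 := beta_ge0; have t_ge0 : 0 <= t by lra.
have gap_le := convex_gradient_ineq hip f_convex f_grad (x t) xs.
have grad_sq := ip_ge0 hip (g (x t)).
have damping_le0 : damping t <= 0 by rewrite /damping; nra.
have : damping t * (ip (g (x t)) (x t - xs) - gap t) <= 0.
  by apply: mulr_le0_ge0 => //; rewrite subr_ge0.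
have : damping t * (beta * (t * t) / 4 * ip (g (x t)) (g (x t))) <= 0.
  apply: mulr_le0_ge0 => //; apply: mulr_ge0 => //.
  by apply: divr_ge0 => //; apply: mulr_ge0 => //; exact: mulr_ge0.
rewrite /energy_rate /damping /gap; lra.
Qed.

(* The weight 1 + 8 beta/t absorbs the remaining positive part of the rate. *)
Lemma weighted_energy_derive t : t0 + 8 * beta < t ->
  exists2 d, is_derive t 1 weighted_energy d & d <= 0.
Proof.
move=> bt; have [b0 t00] := (beta_ge0, t0_gt0).
have t0t : t0 < t by lra.
have t_gt0 : 0 < t by lra.
have t_neq0 : t != 0 by rewrite gt_eqF.
have Dweight : is_derive t 1 (fun s : R => 1 + 8 * beta / s) (- (8 * beta) / (t * t)).
  have := is_deriveD (is_derive_cst (1 : R) t 1) (is_derive_mul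
    (is_derive_cst (8 * beta : R) t 1) (is_deriveV t_neq0 (is_derive_id t 1))).
  by move=> /is_derive_eq; apply; rewrite /= /GRing.scale /=; field.
eexists; first exact: (is_derive_mul (energy_derive t0t) Dweight).
have gap0 := gap_ge0 t.
have rate_le : energy_rate t <= beta * t / 2 * gap t by apply: energy_rate_le; lra.
have energy_ge : t * t * t / 8 * gap t <= energy t by apply: energy_lower; lra.
have weight_le2 : 8 * beta / t <= 1 by rewrite ler_pdivrMr //; lra.
have weight_ge0 : 0 <= 8 * beta / t by apply: divr_ge0; lra.
have half_ge0 : 0 <= beta * t / 2 * gap t.
  by apply: mulr_ge0 => //; apply: divr_ge0; nra.
have : energy_rate t * (1 + 8 * beta / t) <= beta * t / 2 * gap t * 2.
  apply: le_trans (_ : beta * t / 2 * gap t * (1 + 8 * beta / t) <= _).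
    by apply: ler_wpM2r => //; lra.
  by apply: ler_wpM2l => //; lra.
have : beta * t * gap t <= energy t * (8 * beta / (t * t)).
  have := ler_wpM2r (_ : 0 <= 8 * beta / (t * t)) energy_ge.
  rewrite (_ : t * t * t / 8 * gap t * (8 * beta / (t * t)) = beta * t * gap t).
    by apply; apply: divr_ge0; nra.
  by field.
rewrite mulNr mulrN.
set decay := energy t * _; set growth := energy_rate t * _; lra.
Qed.

Lemma weighted_energy_nonincreasing s t : t0 + 8 * beta < s -> s <= t ->
  weighted_energy t <= weighted_energy s.
Proof.
move=> bs st.
have der y : s <= y -> exists2 d, is_derive y 1 weighted_energy d & d <= 0.
  by move=> sy; apply: weighted_energy_derive; apply: lt_le_trans sy.
apply: (ler0_derive1_nincry _ _ _ (lexx s) st).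
- move=> y; rewrite in_itv /= andbT => /ltW /der [d Dd _].
  exact: ex_derive.
- move=> y; rewrite in_itv /= andbT => /ltW /der [d Dd d_le0].
  by rewrite derive1E derive_val.
- apply: derivable_within_continuous => y; rewrite in_itv /= andbT.
  by move=> /der [d Dd _]; exact: ex_derive.
Qed.

Lemma weighted_energy_lower t : 4 * beta <= t -> 0 < t ->
  t * t * t / 8 * gap t <= weighted_energy t.
Proof.
move=> bt t_gt0; have b0 := beta_ge0.
have energy_ge := energy_lower bt.
have energy_ge0 : 0 <= energy t.
  apply: le_trans energy_ge; apply: mulr_ge0 (gap_ge0 t).
  by apply: divr_ge0 => //; rewrite !mulr_ge0 // ltW.
apply: le_trans energy_ge _; rewrite /weighted_energy ler_peMr // lerDl.
by apply: divr_ge0; lra.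
Qed.

(* The Lyapunov argument: the weighted energy bounds t^3 (f(x t) - f xs) / 8
   from above and does not increase, whence the O(1/t^3) rate. *)
Lemma second_order_rate : exists2 C : R, 0 < C &
  exists T : R, forall t, T <= t -> f (x t) - f xs <= C / t ^+ 3.
Proof.
have [b0 t00] := (beta_ge0, t0_gt0).
pose T := t0 + 8 * beta + 1.
have T_gt : t0 + 8 * beta < T by rewrite /T; lra.
have weighted_ge t : T <= t -> t * t * t / 8 * gap t <= weighted_energy t.
  by move=> Tt; apply: weighted_energy_lower; lra.
have WT_ge0 : 0 <= weighted_energy T.
  apply: le_trans (weighted_ge T (lexx T)); apply: mulr_ge0 (gap_ge0 T).
  by apply: divr_ge0 => //; rewrite !mulr_ge0 //; lra.
exists (8 * weighted_energy T + 1); first lra.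
exists T => t Tt; have t_gt0 : 0 < t by lra.
rewrite ler_pdivlMr ?exprn_gt0 // (_ : t ^+ 3 = t * t * t); last first.
  by rewrite !exprS expr0 mulr1 mulrA.
have := weighted_energy_nonincreasing T_gt Tt.
have := weighted_ge t Tt; rewrite /gap; lra.
Qed.
End LyapunovAnalysis.

Unset Implicit Arguments.

Theorem mainTheorem3 (R : realType) (H : completeNormedModType R)
  (ip : H -> H -> R) (f : H -> R) (g : H -> H) (t0 beta : R) (u : R -> H) :
  is_inner_product ip ->
  convex_fun f ->
  is_gradient ip f g ->
  (forall x, differentiable g x) ->
  continuous_differential g ->
  (exists xs : H, forall y, f xs <= f y) ->
  0 < t0 -> 0 <= beta ->
  let u1 := fun t => 'D_1 u t in
  let u2 := fun t => 'D_1 u1 t in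
  let u3 := fun t => 'D_1 u2 t in
  let x := fun t => u t + (t / 4) *: u1 t in
  (forall t, t0 < t ->
     [/\ derivable u t 1, derivable u1 t 1, derivable u2 t 1
       & {for t, continuous u3}]) ->
  (forall t, t0 < t ->
     u3 t + (10 / t) *: u2 t + (20 / t ^+ 2) *: u1 t
     + beta *: 'd g (x t) ((5 / 4) *: u1 t + (t / 4) *: u2 t)
     + g (x t) = 0) ->
  exists2 C : R, 0 < C &
    exists T : R, forall t, T <= t -> f (x t) - inf (range f) <= C / t ^+ 3.
Proof.
move=> hip f_convex f_grad g_diff _ [xs xs_min] t0_gt0 beta_ge0 u1 u2 u3 x
  u_der u_ode.
pose xd t := (5 / 4) *: u1 t + (t / 4) *: u2 t.
pose xdd t := (3 / 2) *: u2 t + (t / 4) *: u3 t.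
have x_ders t : t0 < t -> is_derive t 1 x (xd t) /\ is_derive t 1 xd (xdd t).
  by case/u_der => du du1 du2 _; exact: rescaled_derivatives.
have x_ode t : t0 < t ->
    xdd t + (4 / t) *: xd t + (t / 4) *: (beta *: 'd g (x t) (xd t) + g (x t)) = 0.
  move=> t0t; apply: rescaled_ode_algebra (u_ode t t0t).
  by rewrite gt_eqF // (lt_trans t0_gt0 t0t).
have [C C_gt0 [T decay]] := second_order_rate hip f_convex f_grad g_diff xs_min
  t0_gt0 beta_ge0 (fun t t0t => (x_ders t t0t).1)
  (fun t t0t => (x_ders t t0t).2) x_ode.
have min_le_inf : f xs <= inf (range f).
  by apply: lb_le_inf; [exists (f xs), xs | move=> _ [y _ <-]].
exists C => //; exists T => t Tt; have := decay t Tt; lra.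
Qed.
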